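(* Let $V$ be the complex vector space with basis the Schröder pseudocompositions. For Schröder pseudocompositions $I$ and $J$, write $J=J'0^m$ where $m\ge1$ and $J'$ does not end with $0$, and define $$I\prec J=J'0^{m-1}\cdot I,\qquad I\circ J=(J'\triangleright I)\cdot 0^{m-1},\qquad I\succ J=J'\cdot I\cdot 0^{m-1},$$ extended bilinearly to $V$. Then $(V,\prec,\circ,\succ)$ is a triduplicial algebra, and it is freely generated (as a triduplicial algebra) by the element $x=(1,0,0)$.
   Context: A reduced plane tree is a rooted plane tree in which every internal vertex has at least two children. Its Polish code is the sequence obtained by listing the vertices in preorder (root, then the children's subtrees from left to right, recursively), recording $0$ for a leaf and $k$ for an internal vertex with $k+1$ children. A Schröder pseudocomposition is the Polish code of a reduced plane tree with at least two leaves (such a code always ends with $0$). Here $\cdot$ denotes concatenation of sequences, $0^k$ is the sequence of $k$ zeros, and for $J'=(j_1,\dots,j_s)$, $I=(i_1,\dots,i_r)$, $J'\triangleright I=(j_1,\dots,j_{s-1},j_s+i_1,i_2,\dots,i_r)$. A triduplicial algebra is a vector space with three bilinear operations $\prec,\circ,\succ$ satisfying: $(x\prec y)\prec z=x\prec(y\prec z)$, $(x\circ y)\circ z=x\circ(y\circ z)$, $(x\succ y)\succ z=x\succ(y\succ z)$, $(x\succ y)\prec z=x\succ(y\prec z)$, $(x\circ y)\prec z=x\circ(y\prec z)$, $(x\succ y)\circ z=x\succ(y\circ z)$, $(x\circ y)\succ z=x\circ(y\succ z)$. It is freely generated by $x$ if for every triduplicial algebra $W$ and every $w\in W$ there is a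 unique morphism of triduplicial algebras $V\to W$ sending $x$ to $w$. *)

From HB Require Import structures.
From mathcomp Require Import all_boot all_algebra.
From mathcomp Require Import boolp Rstruct.
From mathcomp.real_closed Require Import complex.
From mathcomp Require Import finmap monalg.

Set Implicit Arguments.
Unset Strict Implicit.
Unset Printing Implicit Defensive.
Import GRing.Theory.
Local Open Scope ring_scope.

Definition CC : fieldType := complex Rdefinitions.R.

Inductive ptree := Leaf | Node of seq ptree.

Fixpoint reduced (t : ptree) : bool :=
  match t with
  | Leaf => true
  | Node ts => (1 < size ts)%N && all reduced ts
  end.

Fixpoint nleaves (t : ptree) : nat :=
  match t with
  | Leaf => 1%N
  | Node ts => sumn (map nleaves ts)
  end.

Fixpoint polish (t : ptree) : seq nat :=
  match t with
  | Leaf => [:: 0%N]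
  | Node ts => (size ts).-1 :: flatten (map polish ts)
  end.

Definition pseudocomp (s : seq nat) : Prop :=
  exists t, reduced t /\ (2 <= nleaves t)%N /\ polish t = s.

Definition is_pc (s : seq nat) : bool := `[< pseudocomp s >].

Definition PC := {s : seq nat | is_pc s}.

(* number m of trailing zeros, and J' with J = J' 0^m *)
Definition tzeros (J : seq nat) : nat := find (fun a => a != 0%N) (rev J).
Definition tprefix (J : seq nat) : seq nat := take (size J - tzeros J) J.

Definition tri (J' I : seq nat) : seq nat :=
  take (size J').-1 J' ++ (last 0%N J' + head 0%N I)%N :: behead I.

Definition prec_seq (I J : seq nat) : seq nat :=
  tprefix J ++ nseq (tzeros J).-1 0%N ++ I.
Definition circ_seq (I J : seq nat) : seq nat :=
  tri (tprefix J) I ++ nseq (tzeros J).-1 0%N.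
Definition succ_seq (I J : seq nat) : seq nat :=
  tprefix J ++ I ++ nseq (tzeros J).-1 0%N.

Definition V : lmodType CC := {malg CC[PC]}.

(* basis vector of a sequence (0 if it is not a pseudocomposition, which
   never happens for the sequences produced by the operations below) *)
Definition bvec (s : seq nat) : V :=
  if insub s is Some k then << (k : PC) >> else 0.

Definition bilin_ext (op : seq nat -> seq nat -> seq nat) (f g : V) : V :=
  \sum_(i <- msupp f) \sum_(j <- msupp g)
     (f@_i * g@_j) *: bvec (op (val i) (val j)).

Definition Vprec : V -> V -> V := bilin_ext prec_seq.
Definition Vcirc : V -> V -> V := bilin_ext circ_seq.
Definition Vsucc : V -> V -> V := bilin_ext succ_seq.

Definition xgen : V := bvec [:: 1%N; 0%N; 0%N].

Definition bilinear_op (W : lmodType CC) (op : W -> W -> W) : Prop :=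
  (forall (a : CC) (x x' y : W), op (a *: x + x') y = a *: op x y + op x' y) /\
  (forall (a : CC) (x y y' : W), op x (a *: y + y') = a *: op x y + op x y').

Definition triduplicial (W : lmodType CC) (l c r : W -> W -> W) : Prop :=
  bilinear_op l /\ bilinear_op c /\ bilinear_op r /\
  (forall x y z, l (l x y) z = l x (l y z)) /\
  (forall x y z, c (c x y) z = c x (c y z)) /\
  (forall x y z, r (r x y) z = r x (r y z)) /\
  (forall x y z, l (r x y) z = r x (l y z)) /\
  (forall x y z, l (c x y) z = c x (l y z)) /\
  (forall x y z, c (r x y) z = r x (c y z)) /\
  (forall x y z, r (c x y) z = c x (r y z)).

Definition tri_morph (U W : lmodType CC) (l c r : U -> U -> U)
    (l' c' r' : W -> W -> W) (f : U -> W) : Prop :=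
  [/\ forall (a : CC) (u v : U), f (a *: u + v) = a *: f u + f v,
      forall u v, f (l u v) = l' (f u) (f v),
      forall u v, f (c u v) = c' (f u) (f v) &
      forall u v, f (r u v) = r' (f u) (f v)].

From HB Require Import structures.
From mathcomp Require Import all_boot all_algebra.
From mathcomp Require Import boolp Rstruct.
From mathcomp.real_closed Require Import complex.
From mathcomp Require Import finmap monalg.
From mathcomp Require Import zify.

Set Implicit Arguments.
Unset Strict Implicit.
Unset Printing Implicit Defensive.

(* A sequence is the Polish code of a forest of [k] trees iff its Lukasiewicz
   walk started at height [k] first reaches [0] at its end; this recognises
   Schroder pseudocompositions and cuts codes into subtrees.  Writing
   [J = J' 0^(m+1)] with [J'] not ending in [0], each of the seven axioms
   becomes an identity between concatenations of sequences.
   For freeness, orient the axioms as [A n (B m1 m2) -> B (A n m1) m2]: every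
   word in [x] rewrites to a normal form, and a normal form can be read back
   from its code.  Hence the codes of words are exactly the pseudocompositions,
   words with the same code evaluate equally in every triduplicial algebra, and
   evaluation of words factors uniquely through [V]. *)

(** * Lukasiewicz walks and Polish codes *)

(* [lwalk k s] reads [s] as a Polish code with [k] subtrees still to be read:
   [0] completes one of them, [a > 0] replaces one by [a + 1]. *)
Fixpoint lwalk (k : nat) (s : seq nat) : option nat :=
  match s with
  | [::] => Some k
  | a :: s' => if k == 0 then None else lwalk (if a == 0 then k.-1 else k + a) s'
  end.

Lemma lwalk_cat k s t : lwalk k (s ++ t) = obind (lwalk^~ t) (lwalk k s).
Proof. by elim: s k => [|a s IH] k //=; case: (k == 0). Qed.

Lemma lwalk_addn s k k' d : lwalk k s = Some k' -> lwalk (k + d) s = Some (k' + d).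
Proof.
elim: s k => [|a s IH] k /=; first by case=> ->.
case: k => [|k] //= walk_s; rewrite addSn /=.
case: eqP walk_s => _ walk_s; first exact: IH.
have -> : (k + d).+1 + a = k.+1 + a + d by lia.
exact: IH.
Qed.

Lemma lwalk1_cons a s : a != 0 -> lwalk 1 (a :: s) = lwalk a.+1 s.
Proof. by move=> /negbTE /= ->; rewrite add1n. Qed.

Lemma lwalk_nseq0 k n : lwalk k (nseq n 0) = if n <= k then Some (k - n) else None.
Proof.
elim: n k => [|n IH] k /=; first by rewrite subn0.
by case: k => [|k] //=; rewrite IH; case: ifP.
Qed.

Lemma lwalk_last0 k s : lwalk k s = Some 0 -> s = [::] \/ last 0 s = 0.
Proof.
elim: s k => [|a s IH] k /=; first by left.
case: k => [|k] //= walk_s; right.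
case: s IH walk_s => [|b s] IH /=.
  by case: eqP => [-> //|_] [] /eqP; rewrite addn_eq0 andFb.
by case/IH.
Qed.

(* [lsplit k s] cuts off the first [k] complete codes of [s]. *)
Fixpoint lsplit (k : nat) (s : seq nat) : seq nat * seq nat :=
  if k is 0 then ([::], s) else
  match s with
  | [::] => ([::], [::])
  | a :: s' => let p := lsplit (if a == 0 then k.-1 else k + a) s' in (a :: p.1, p.2)
  end.

Lemma lsplit0 s : lsplit 0 s = ([::], s). Proof. by case: s. Qed.

Lemma lsplit_cat n x y : lwalk n x = Some 0 -> lsplit n (x ++ y) = (x, y).
Proof.
elim: x n => [|a x IH] n /=; first by case=> ->; rewrite lsplit0.
by case: n => [|n] //= /IH ->.
Qed.

Lemma lwalk_lsplit n m s : lwalk (n + m) s = Some 0 ->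
  [/\ s = (lsplit n s).1 ++ (lsplit n s).2, lwalk n (lsplit n s).1 = Some 0 &
      lwalk m (lsplit n s).2 = Some 0].
Proof.
elim: s n => [|a s IH] n /=.
  by case=> /eqP; rewrite addn_eq0 => /andP[/eqP -> /eqP ->].
case: n => [|n] /=; first by rewrite add0n => ->.
set n' := (if a == 0 then n else n.+1 + a).
have -> : (if a == 0 then n + m else n.+1 + m + a) = n' + m.
  by rewrite /n'; case: (a == 0) => //; lia.
by case/IH => {1}<- -> ->.
Qed.

Definition pcode (s : seq nat) : bool := (lwalk 1 s == Some 0) && (head 0 s != 0).

Lemma pcode_lwalk s : pcode s -> lwalk 1 s = Some 0.
Proof. by case/andP=> /eqP. Qed.

Lemma pcode_neq0 s : pcode s -> (s == [:: 0]) = false.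
Proof. by case/andP=> _; case: s => // a [|b s] //=; case: a. Qed.

Lemma lwalk1_code s : lwalk 1 s = Some 0 -> s = [:: 0] \/ pcode s.
Proof.
move=> walk_s; rewrite /pcode walk_s eqxx /=.
case: s walk_s => [|[|a] s] //= walk_s; [left | by right].
by case: s walk_s.
Qed.

Fixpoint allP (P : ptree -> Prop) (ts : seq ptree) : Prop :=
  if ts is t :: ts' then P t /\ allP P ts' else True.

Definition ptree_all_ind (P : ptree -> Prop) (HL : P Leaf)
    (HN : forall ts, allP P ts -> P (Node ts)) : forall t, P t :=
  fix F t := match t with
  | Leaf => HL
  | Node ts => HN ts ((fix G ts := match ts return allP P ts with
                        | [::] => I
                        | t :: ts' => conj (F t) (G ts') end) ts)
  end.

Lemma lwalk_polish t : reduced t -> forall k s, lwalk k.+1 (polish t ++ s) = lwalk k s.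
Proof.
elim/ptree_all_ind: t => [|ts IH] //= /andP[size_ts red_ts] k s.
have walk_forest k' : lwalk (k' + size ts) (flatten (map polish ts) ++ s) = lwalk k' s.
  elim: ts IH red_ts {size_ts} k' => [|t ts IHts] /= => [_ _ k'|[IHt IH] /andP[rt rts] k'].
    by rewrite addn0.
  by rewrite -catA addnS IHt // IHts.
have -> : ((size ts).-1 == 0) = false by case: (size ts) size_ts => [|[|m]].
by rewrite -walk_forest addSnnS prednK // ltnW.
Qed.

Lemma nleaves_gt0 t : reduced t -> 0 < nleaves t.
Proof.
elim/ptree_all_ind: t => [|ts IH] //= /andP[size_ts red_ts].
case: ts IH red_ts size_ts => [|t ts] //= [IHt _] /andP[rt _] _.
by rewrite (leq_trans (IHt rt)) // leq_addr.
Qed.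

Lemma lwalk_forest n s : lwalk n s = Some 0 ->
  exists ts, [/\ size ts = n, all reduced ts & flatten (map polish ts) = s].
Proof.
have [N] := ubnP (size s); elim: N s n => // N IH s n.
case: s => [|a s] size_s; first by case=> ->; exists [::].
case: n => [|n] // walk_s.
have : lwalk (1 + n) (a :: s) = Some 0 by [].
case/lwalk_lsplit; set s1 := (lsplit 1 _).1; set s2 := (lsplit 1 _).2.
case: s1 => [|b s1] // def_s walk_s1 walk_s2.
have [|ts2 [size_ts2 red_ts2 code_ts2]] := IH s2 n _ walk_s2.
  by move: size_s; rewrite def_s /= size_cat; lia.
have [t [red_t code_t]] : exists t, reduced t /\ polish t = b :: s1.
  case: (eqVneq b 0) walk_s1 => [-> /= | b_neq0].
    by case: s1 {def_s} => // _; exists Leaf.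
  rewrite lwalk1_cons // => /IH[|ts1 [size_ts1 red_ts1 code_ts1]].
    by move: size_s; rewrite def_s /= size_cat; lia.
  by exists (Node ts1); rewrite /= size_ts1 red_ts1 code_ts1 andbT; split => //; lia.
by exists (t :: ts2); rewrite /= size_ts2 red_t red_ts2 code_t code_ts2.
Qed.

Lemma is_pcE s : is_pc s = pcode s.
Proof.
apply/asboolP/idP => [[t [red_t [leaves_t <-]]] | pc_s].
  apply/andP; split; first by rewrite -[polish t]cats0 (lwalk_polish red_t 0).
  by case: t red_t leaves_t => //= ts /andP[size_ts _] _; lia.
case/andP: (pc_s) => /eqP /lwalk_forest [[|t [|t' ts]] [//= _ /andP[red_t _]]].
rewrite cats0 => code_t; exists t; do !split => //.
case: t red_t code_t => [|ts] /=; first by move=> _ code_t; rewrite -code_t in pc_s.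
case/andP=> size_ts red_ts _.
case: ts size_ts red_ts => [|t1 [|t2 ts]] //= _ /and3P[r1 r2 _].
by have := nleaves_gt0 r1; have := nleaves_gt0 r2; lia.
Qed.

(** * The three operations on sequences *)

Lemma split_zero_tail s : has (fun a => a != 0) s ->
  exists P m, s = P ++ nseq m 0 /\ last 0 P != 0.
Proof.
elim/last_ind: s => [|s a IH] //.
rewrite -cats1 has_cat /= orbF.
case: (eqVneq a 0) => [-> | a_neq0] /=.
  by rewrite orbF => /IH [P [m [-> lastP]]]; exists P, m.+1; rewrite -catA -addn1 nseqD.
by move=> _; exists (s ++ [:: a]), 0; rewrite cats0 last_cat.
Qed.

Lemma tzeros_tprefix P m : last 0 P != 0 ->
  tzeros (P ++ nseq m 0) = m /\ tprefix (P ++ nseq m 0) = P.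
Proof.
move=> lastP.
have tzE : tzeros (P ++ nseq m 0) = m.
  rewrite /tzeros rev_cat rev_nseq find_cat has_nseq /= andbF size_nseq.
  case/lastP: P lastP => [|P p] //=; rewrite last_rcons rev_rcons /= => ->.
  by rewrite addn0.
by split => //; rewrite /tprefix tzE size_cat size_nseq addnK take_size_cat.
Qed.

Lemma prec_seq_cat I Q b : last 0 Q != 0 ->
  prec_seq I (Q ++ nseq b.+1 0) = Q ++ nseq b 0 ++ I.
Proof. by case/(tzeros_tprefix b.+1)=> tzE prefE; rewrite /prec_seq tzE prefE. Qed.

Lemma succ_seq_cat I Q b : last 0 Q != 0 ->
  succ_seq I (Q ++ nseq b.+1 0) = Q ++ I ++ nseq b 0.
Proof. by case/(tzeros_tprefix b.+1)=> tzE prefE; rewrite /succ_seq tzE prefE. Qed.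

Lemma circ_seq_cat I Q b : last 0 Q != 0 ->
  circ_seq I (Q ++ nseq b.+1 0) = tri Q I ++ nseq b 0.
Proof. by case/(tzeros_tprefix b.+1)=> tzE prefE; rewrite /circ_seq tzE prefE. Qed.

Lemma tri_rcons Q q P : tri (rcons Q q) P = Q ++ (q + head 0 P) :: behead P.
Proof. by rewrite /tri size_rcons /= -cats1 take_size_cat // last_cat. Qed.

Lemma tri_catr R Q Z : Q != [::] -> tri R (Q ++ Z) = tri R Q ++ Z.
Proof. by case: Q => // q Q _; rewrite /tri /= -catA. Qed.

Lemma tri_catl X Q P : Q != [::] -> tri (X ++ Q) P = X ++ tri Q P.
Proof. by case/lastP: Q => // Q q _; rewrite -rcons_cat !tri_rcons catA. Qed.

Lemma triA R Q P : R != [::] -> Q != [::] -> tri R (tri Q P) = tri (tri R Q) P.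
Proof.
case/lastP: R => // R r _; case/lastP: Q => // Q q _; rewrite !tri_rcons.
case: Q => [|q0 Q] /=; first by rewrite cats1 tri_rcons addnA.
by rewrite -rcons_cons -rcons_cat tri_rcons -catA.
Qed.

Lemma tri_neq_nil R Q : tri R Q != [::].
Proof. by rewrite /tri; case: (take _ _). Qed.

Lemma last_tri_neq0 R Q : last 0 R != 0 -> last 0 Q != 0 -> last 0 (tri R Q) != 0.
Proof.
case/lastP: R => [|R r] //; rewrite last_rcons => r_neq0.
case: Q => [|q Q] //= lastQ; rewrite tri_rcons /= last_cat /=.
by case: Q lastQ => [|q' Q] //=; lia.
Qed.

Lemma last_neq0_nil Q : last 0 Q != 0 -> Q != [::].
Proof. by case: Q. Qed.

Lemma last_cat_neq0 X Q : last 0 Q != 0 -> last 0 (X ++ Q) != 0.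
Proof. by case: Q => // q Q; rewrite last_cat. Qed.

Lemma pcode_zero_tail s : pcode s -> exists P m,
  [/\ s = P ++ nseq m.+1 0, last 0 P != 0, lwalk 1 P = Some m.+1 & head 0 P != 0].
Proof.
case/andP => /eqP walk_s head_s.
have : has (fun a => a != 0) s by case: s head_s {walk_s} => //= a s ->.
case/split_zero_tail => P [m [def_s lastP]].
have P_nil := last_neq0_nil lastP.
case: m def_s => [|m] def_s.
  case: (lwalk_last0 walk_s) => [s_nil|]; first by rewrite s_nil in head_s.
  by rewrite def_s cats0 => last0; rewrite last0 in lastP.
exists P, m; split => //.
  move: walk_s; rewrite def_s lwalk_cat; case: (lwalk 1 P) => [k|] //=.
  by case: ifP => // k_neq0; rewrite lwalk_nseq0; case: ifP => // le_mk [] k0; congr Some; lia.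
by move: head_s; rewrite def_s; case: P P_nil {lastP def_s}.
Qed.

Lemma pcode_cat_nseq0 P m : lwalk 1 P = Some m -> head 0 P != 0 -> pcode (P ++ nseq m 0).
Proof.
move=> walk_P head_P; apply/andP; split.
  by rewrite lwalk_cat walk_P /= lwalk_nseq0 leqnn subnn.
by case: P walk_P head_P.
Qed.

Lemma pcode_prec x y : pcode x -> pcode y -> pcode (prec_seq x y).
Proof.
case/pcode_zero_tail=> P [a [-> _ walk_P head_P]].
case/pcode_zero_tail=> Q [b [-> lastQ walk_Q head_Q]].
rewrite prec_seq_cat // !catA; apply: pcode_cat_nseq0.
  by rewrite !lwalk_cat walk_Q /= lwalk_nseq0 leqnSn subSnn /= walk_P.
by case: Q lastQ head_Q {walk_Q}.
Qed.

Lemma pcode_succ x y : pcode x -> pcode y -> pcode (succ_seq x y).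
Proof.
case/andP=> /eqP walk_x _; case/pcode_zero_tail=> Q [b [-> lastQ walk_Q head_Q]].
rewrite succ_seq_cat //=; apply/andP; split.
  rewrite !lwalk_cat walk_Q /=.
  have := lwalk_addn b walk_x; rewrite add1n add0n => walk_xb.
  by rewrite lwalk_cat walk_xb /= lwalk_nseq0 leqnn subnn.
by case: Q lastQ head_Q {walk_Q}.
Qed.

Lemma pcode_circ x y : pcode x -> pcode y -> pcode (circ_seq x y).
Proof.
case: x => [|p X] //; case/andP=> /eqP walk_x /= p_neq0.
case/pcode_zero_tail=> Q [b [-> lastQ walk_Q head_Q]].
rewrite circ_seq_cat //=.
case/lastP: Q lastQ walk_Q head_Q => [|Q q] //; rewrite last_rcons => q_neq0 walk_Q head_Q.
rewrite tri_rcons /= -catA /=.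
move: walk_Q; rewrite -cats1 lwalk_cat; case walk_Q: (lwalk 1 Q) => [k|] //=.
case: eqP => // /eqP k_neq0; rewrite (negbTE q_neq0) => -[def_k].
rewrite lwalk1_cons // in walk_x.
apply/andP; split; last by case: Q walk_Q head_Q => //= *; lia.
rewrite lwalk_cat walk_Q /= (negbTE k_neq0).
have -> : (q + p == 0) = false by lia.
have := lwalk_addn b walk_x; rewrite add0n => walk_xb.
have -> : k + (q + p) = p.+1 + b by lia.
by rewrite lwalk_cat walk_xb /= lwalk_nseq0 leqnn subnn.
Qed.

Inductive opkind := Prec | Circ | Succ.

Definition pick_op (T : Type) (l c r : T) (A : opkind) : T :=
  match A with Prec => l | Circ => c | Succ => r end.

(* [(A, B)] is an axiom pair when [B (A x y) z = A x (B y z)] is one of the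
   seven triduplicial axioms. *)
Definition assoc_pair (A B : opkind) : bool :=
  match A, B with Prec, Prec => true | Prec, _ => false | _, _ => true end.

Definition seq_op : opkind -> seq nat -> seq nat -> seq nat :=
  pick_op prec_seq circ_seq succ_seq.

Lemma pcode_seq_op A x y : pcode x -> pcode y -> pcode (seq_op A x y).
Proof. by case: A; [exact: pcode_prec | exact: pcode_circ | exact: pcode_succ]. Qed.

Lemma seq_op_assoc A B x y z : pcode y -> pcode z -> assoc_pair A B ->
  seq_op B (seq_op A x y) z = seq_op A x (seq_op B y z).
Proof.
move=> /pcode_zero_tail[Q [b [-> lastQ _ _]]] /pcode_zero_tail[R [c [-> lastR _ _]]].
have Q_nil := last_neq0_nil lastQ.
have catQ_nil X : X ++ Q != [::] by case: X.
have E1 : R ++ nseq c 0 ++ Q ++ nseq b.+1 0 = (R ++ nseq c 0 ++ Q) ++ nseq b.+1 0.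
  by rewrite !catA.
have E2 : R ++ (Q ++ nseq b.+1 0) ++ nseq c 0 = (R ++ Q) ++ nseq (b + c).+1 0.
  by rewrite -addSn nseqD !catA.
have E3 : tri R Q ++ nseq b.+1 0 ++ nseq c 0 = tri R Q ++ nseq (b + c).+1 0.
  by rewrite -nseqD addSn.
case: A; case: B => // _ /=.
- by rewrite !prec_seq_cat // E1 prec_seq_cat ?last_cat_neq0 // -!catA.
- rewrite !prec_seq_cat // circ_seq_cat // E1 circ_seq_cat ?last_cat_neq0 //.
  by rewrite (tri_catl R) ?catQ_nil // (tri_catl (nseq c 0)) // !catA.
- rewrite !circ_seq_cat // (tri_catr _ _ (tri_neq_nil Q x)) (tri_catr _ _ Q_nil).
  rewrite -[(tri R Q ++ _) ++ _]catA E3 circ_seq_cat ?last_tri_neq0 //.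
  by rewrite triA ?last_neq0_nil // nseqD catA.
- rewrite !succ_seq_cat // circ_seq_cat // E2 circ_seq_cat ?last_cat_neq0 //.
  by rewrite tri_catl // nseqD !catA.
- by rewrite !prec_seq_cat // !succ_seq_cat // E1 succ_seq_cat ?last_cat_neq0 // !catA.
- rewrite !circ_seq_cat // succ_seq_cat // !(tri_catr _ _ Q_nil).
  rewrite -[(tri R Q ++ nseq b.+1 0) ++ _]catA E3.
  by rewrite succ_seq_cat ?last_tri_neq0 // nseqD !catA.
- by rewrite !succ_seq_cat // E2 succ_seq_cat ?last_cat_neq0 // nseqD !catA.
Qed.

(** * Words in x and their normal forms *)

Inductive word := Wx | Wop of opkind & word & word.

Fixpoint word_code (t : word) : seq nat :=
  match t with Wx => [:: 1; 0; 0] | Wop A t u => seq_op A (word_code t) (word_code u) end.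

Lemma pcode_word_code t : pcode (word_code t).
Proof. by elim: t => [|A t IHt u IHu] //=; apply: pcode_seq_op. Qed.

Fixpoint wsize (t : word) : nat :=
  match t with Wx => 1 | Wop _ t u => (wsize t + wsize u).+1 end.

Fixpoint nf_op (A : opkind) (n m : word) : word :=
  match m with
  | Wx => Wop A n Wx
  | Wop B m1 m2 => if assoc_pair A B then nf_op B (nf_op A n m1) m2 else Wop A n m
  end.

Fixpoint word_nf (t : word) : word :=
  match t with Wx => Wx | Wop A t u => nf_op A (word_nf t) (word_nf u) end.

Lemma word_code_nf_op A n m : word_code (nf_op A n m) = seq_op A (word_code n) (word_code m).
Proof.
elim: m A n => [|B m1 IH1 m2 IH2] A n //=.
case: ifP => // AB; rewrite IH2 IH1 seq_op_assoc //; exact: pcode_word_code.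
Qed.

Lemma word_code_nf t : word_code (word_nf t) = word_code t.
Proof. by elim: t => [|A t IHt u IHu] //=; rewrite word_code_nf_op IHt IHu. Qed.

Definition is_Prec A := if A is Prec then true else false.
Definition is_Wx t := if t is Wx then true else false.

Fixpoint is_nf (t : word) : bool :=
  match t with
  | Wx => true
  | Wop A n m => is_nf n && match m with
      | Wx => true
      | Wop B m1 m2 => [&& is_Prec A, ~~ is_Prec B, is_Wx m2 & is_nf m1] end
  end.

Lemma is_nf_Wop A n m : is_nf (Wop A n m) -> is_nf n /\ is_nf m.
Proof.
case/andP=> nf_n nf_m; split => //; case: m nf_m => [|B m1 m2] //= /and4P[_ _].
by case: m2 => // _ nf_m1; apply/andP.
Qed.

Lemma is_nf_nf_op A n m : is_nf n -> is_nf m -> is_nf (nf_op A n m).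
Proof.
elim: m A n => [|B m1 IH1 m2 IH2] A n nf_n nf_m /=; first by rewrite nf_n.
have [nf_m1 nf_m2] := is_nf_Wop nf_m.
case: ifP => AB; first by apply: IH2 => //; apply: IH1.
rewrite /= nf_n /=.
case: A AB => //; case: B nf_m {IH1 IH2 nf_m2} => // nf_m _;
  by case: m2 nf_m => [|B' q r] /=; rewrite ?nf_m1 ?andbF.
Qed.

Lemma is_nf_word_nf t : is_nf (word_nf t).
Proof. by elim: t => [|A t IHt u IHu] //=; apply: is_nf_nf_op. Qed.

Lemma word_code_prec_x t : word_code (Wop Prec t Wx) = [:: 1, 0 & word_code t].
Proof. by []. Qed.

Lemma word_code_succ_x t : word_code (Wop Succ t Wx) = 1 :: word_code t ++ [:: 0].
Proof. by []. Qed.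

Lemma word_code_circ_x t :
  word_code (Wop Circ t Wx) = (1 + head 0 (word_code t)) :: behead (word_code t) ++ [:: 0].
Proof. by []. Qed.

Lemma prec_seq_rcons I J : pcode (rcons J 0) -> prec_seq I (rcons J 0) = J ++ I.
Proof.
case/pcode_zero_tail=> P [m [def_J lastP _ _]].
have def_J' : rcons J 0 = rcons (P ++ nseq m 0) 0.
  by rewrite def_J -cats1 -catA -addn1 nseqD.
by move/rcons_inj: (def_J') => [->]; rewrite -def_J' def_J prec_seq_cat // catA.
Qed.

Lemma word_code_prec_circ t q : word_code (Wop Prec t (Wop Circ q Wx)) =
  (1 + head 0 (word_code q)) :: behead (word_code q) ++ word_code t.
Proof.
have := pcode_word_code (Wop Circ q Wx).
change (word_code (Wop Prec t _)) with (prec_seq (word_code t) (word_code (Wop Circ q Wx))).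
by rewrite word_code_circ_x -cat_cons cats1 => /prec_seq_rcons ->.
Qed.

Lemma word_code_prec_succ t q :
  word_code (Wop Prec t (Wop Succ q Wx)) = 1 :: word_code q ++ word_code t.
Proof.
have := pcode_word_code (Wop Succ q Wx).
change (word_code (Wop Prec t _)) with (prec_seq (word_code t) (word_code (Wop Succ q Wx))).
by rewrite word_code_succ_x -cat_cons cats1 => /prec_seq_rcons ->.
Qed.

(* [decode f s] inverts [word_code] on normal forms ([f] is fuel).  The root of
   [s] has children [A] followed by a last child [B]; unless [B] is a leaf, [s]
   is [B] grafted by [Prec] onto the tree [t'] where [B] is replaced by a leaf.
   Then [t'] is [Wx] if [A] is a single leaf, [Wop Succ A Wx] for other binary
   roots, and [Wop Circ (h.-1 :: A) Wx] otherwise. *)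
Fixpoint decode (f : nat) (s : seq nat) : word :=
  if f is f'.+1 then
    if s is h :: s' then
      let: (A, B) := lsplit h s' in
      let t' := if h != 1 then Wop Circ (decode f' (h.-1 :: A)) Wx
                else if A == [:: 0] then Wx else Wop Succ (decode f' A) Wx in
      if B == [:: 0] then t' else Wop Prec (decode f' B) t'
    else Wx
  else Wx.

Lemma pcode_root s : pcode s -> exists h A B,
  [/\ s = h :: A ++ B, 0 < h, lwalk h A = Some 0, lwalk 1 B = Some 0
    & lsplit h (A ++ B) = (A, B)].
Proof.
case: s => [|h s] // /andP[/eqP walk_s /= h_neq0].
rewrite lwalk1_cons // -addn1 in walk_s.
case: (lwalk_lsplit walk_s) => def_s walk_A walk_B.
exists h, (lsplit h s).1, (lsplit h s).2.
by rewrite -def_s lt0n; split => //; case: (lsplit h s).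
Qed.

Lemma lwalk_head_code s : pcode s -> lwalk (head 0 s).+1 (behead s) = Some 0.
Proof. by case: s => [|a s] // /andP[/eqP walk_s /= a_neq0]; rewrite -lwalk1_cons. Qed.

Lemma decode_prec_x f t :
  decode f.+1 (word_code (Wop Prec t Wx)) = Wop Prec (decode f (word_code t)) Wx.
Proof. by rewrite word_code_prec_x /= lsplit0 /= pcode_neq0 ?pcode_word_code. Qed.

Lemma decode_succ_x f t :
  decode f.+1 (word_code (Wop Succ t Wx)) = Wop Succ (decode f (word_code t)) Wx.
Proof.
have pc_t := pcode_word_code t.
by rewrite word_code_succ_x /= lsplit_cat ?pcode_lwalk //= pcode_neq0.
Qed.

Lemma decode_circ_x f t :
  decode f.+1 (word_code (Wop Circ t Wx)) = Wop Circ (decode f (word_code t)) Wx.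
Proof.
have pc_t := pcode_word_code t.
rewrite word_code_circ_x add1n /= lsplit_cat ?lwalk_head_code //=.
by case: (word_code t) pc_t => [|[|a] s] // /andP[].
Qed.

Lemma decode_prec_circ f t q : decode f.+1 (word_code (Wop Prec t (Wop Circ q Wx))) =
  Wop Prec (decode f (word_code t)) (Wop Circ (decode f (word_code q)) Wx).
Proof.
have pc_q := pcode_word_code q; have pc_t := pcode_word_code t.
rewrite word_code_prec_circ add1n /= lsplit_cat ?lwalk_head_code //= pcode_neq0 //.
by case: (word_code q) pc_q => [|[|a] s] // /andP[].
Qed.

Lemma decode_prec_succ f t q : decode f.+1 (word_code (Wop Prec t (Wop Succ q Wx))) =
  Wop Prec (decode f (word_code t)) (Wop Succ (decode f (word_code q)) Wx).
Proof.
have pc_q := pcode_word_code q; have pc_t := pcode_word_code t.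
by rewrite word_code_prec_succ /= lsplit_cat ?pcode_lwalk //= !pcode_neq0.
Qed.

Lemma decode_word_code f n : is_nf n -> wsize n <= f -> decode f (word_code n) = n.
Proof.
elim: f n => [|f IH] n nf_n size_n; first by case: n nf_n size_n.
case: n nf_n size_n => [|A t m] nf_n size_n; first by [].
have [nf_t nf_m] := is_nf_Wop nf_n.
case: m nf_n nf_m size_n => [|B q m2] nf_n nf_m size_n; rewrite /= in size_n.
  by case: A {nf_n}; rewrite ?decode_prec_x ?decode_circ_x ?decode_succ_x IH //; lia.
move: nf_n => /andP[_ /and4P[Prec_A Prec_B Wx_m2 nf_q]].
case: A Prec_A => // _; case: m2 Wx_m2 {nf_m} size_n => // _ size_n.
by case: B Prec_B => // _; rewrite ?decode_prec_circ ?decode_prec_succ !IH //; lia.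
Qed.

Lemma word_code_decode f s : pcode s -> size s <= f -> word_code (decode f s) = s.
Proof.
elim: f s => [|f IH] s pc_s; first by case: s pc_s.
case/pcode_root: (pc_s) => h [A [B [def_s h_gt0 walk_A walk_B split_AB]]].
rewrite def_s /= size_cat split_AB /= => size_AB.
have size_B_gt0 : 0 < size B by case: B walk_B {split_AB def_s size_AB}.
set t' := (if h != 1 then _ else _).
have code_t' : word_code t' = rcons (h :: A) 0.
  rewrite /t' -cats1; case: (eqVneq h 1) => [h1 | h_neq1]; rewrite [X in word_code X]/=.
    subst h; case: (lwalk1_code walk_A) => [-> // | pc_A].
    by rewrite pcode_neq0 // word_code_succ_x IH //; lia.
  have pc_A' : pcode (h.-1 :: A).
    by rewrite /pcode lwalk1_cons ?prednK ?walk_A //=; lia.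
  by rewrite word_code_circ_x IH //= ?add1n ?prednK //; lia.
case: (lwalk1_code walk_B) => [-> | pc_B]; first by rewrite eqxx code_t' cats1.
have := pcode_word_code t'; rewrite code_t' => pc_t'.
by rewrite pcode_neq0 //= IH ?code_t' ?prec_seq_rcons //; lia.
Qed.

(** * Linear and bilinear maps on V *)

Import GRing.Theory.
Local Open Scope ring_scope.

Section LinearExtension.
Variable W : lmodType CC.

Definition linext (F : PC -> W) (v : V) : W := \sum_(k <- msupp v) v@_k *: F k.

Lemma linext_supp F (v : V) (D : {fset PC}) : (msupp v `<=` D)%fset ->
  linext F v = \sum_(k <- D) v@_k *: F k.
Proof.
move=> supp_v; rewrite /linext (big_fset_incl _ supp_v) // => k _ /mcoeff_outdom ->.
by rewrite scale0r.
Qed.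

Lemma linext_is_linear F : linear (linext F).
Proof.
move=> a u v; set D := (msupp u `|` msupp v)%fset.
have supp_uv : (msupp (a *: u + v) `<=` D)%fset.
  by apply: fsubset_trans (msuppD_le _ _) _; apply: fsetUSS => //; apply: msuppZ_le.
rewrite (linext_supp F supp_uv) (linext_supp F (fsubsetUl (msupp u) (msupp v))).
rewrite (linext_supp F (fsubsetUr (msupp u) (msupp v))) scaler_sumr -big_split /=.
by apply: eq_bigr => k _; rewrite mcoeffD mcoeffZ scalerDl scalerA.
Qed.

Lemma linext_lincomb F G a (v : V) :
  linext (fun k => a *: F k + G k) v = a *: linext F v + linext G v.
Proof.
rewrite /linext scaler_sumr -big_split /=; apply: eq_bigr => k _.
by rewrite scalerDr !scalerA mulrC.
Qed.

Lemma linextU F k : linext F << k >> = F k.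
Proof. by rewrite /linext msuppU oner_eq0 big_seq_fset1 mcoeffUU scale1r. Qed.

Lemma eq_linext F G (v : V) : F =1 G -> linext F v = linext G v.
Proof. by move=> eqFG; apply: eq_bigr => k _; rewrite eqFG. Qed.

Lemma linear_fun0 (h : V -> W) : linear h -> h 0 = 0.
Proof.
move=> h_lin; have := h_lin 1 0 0; rewrite !scale1r addr0 => h0.
by apply: (addrI (h 0)); rewrite addr0 -h0.
Qed.

Lemma linear_comp_fun (U : lmodType CC) (f : V -> U) (g : U -> W) :
  linear f -> linear g -> linear (fun v => g (f v)).
Proof. by move=> f_lin g_lin a u v; rewrite f_lin g_lin. Qed.

Lemma bilinear_opl (op : W -> W -> W) y : bilinear_op op -> linear (op^~ y).
Proof. by case=> op_lin _ a u v; apply: op_lin. Qed.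

Lemma bilinear_opr (op : W -> W -> W) x : bilinear_op op -> linear (op x).
Proof. by case=> _ op_lin a u v; apply: op_lin. Qed.

End LinearExtension.

Lemma linear_linext (W : lmodType CC) (h : V -> W) (F : PC -> V) v :
  linear h -> h (linext F v) = linext (h \o F) v.
Proof.
move=> h_lin; rewrite /linext; elim: (enum_fset (msupp v)) => [|k s IH].
  by rewrite !big_nil linear_fun0.
by rewrite !big_cons h_lin IH.
Qed.

Lemma malgU_scale (c : CC) (k : PC) : << c *g k >> = c *: (<< k >> : V).
Proof. by rewrite malgZ_def /fgscale msuppU oner_eq0 big_seq_fset1 mcoeffUU mulr1. Qed.

Lemma linext_basis (v : V) : linext (fun k => << k >>) v = v.
Proof. by rewrite [RHS]monalgE /linext; apply: eq_bigr => k _; rewrite -malgU_scale. Qed.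

Lemma linear_basis_ext (W : lmodType CC) (h1 h2 : V -> W) : linear h1 -> linear h2 ->
  (forall k, h1 << k >> = h2 << k >>) -> h1 =1 h2.
Proof.
move=> h1_lin h2_lin eq_h v; rewrite -(linext_basis v) !linear_linext //.
exact: eq_linext.
Qed.

Lemma bilinear_basis_morph (W : lmodType CC) (opV : V -> V -> V) (opW : W -> W -> W)
    (h g : V -> W) :
  bilinear_op opV -> bilinear_op opW -> linear h -> linear g ->
  (forall i j, h (opV << i >> << j >>) = opW (g << i >>) (g << j >>)) ->
  forall u v, h (opV u v) = opW (g u) (g v).
Proof.
move=> opV_bil opW_bil h_lin g_lin eq_ij u v.
move: u; apply: linear_basis_ext => [||i].
- exact: linear_comp_fun (bilinear_opl v opV_bil) h_lin.
- exact: linear_comp_fun g_lin (bilinear_opl (g v) opW_bil).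
move: v; apply: linear_basis_ext => [||j].
- exact: linear_comp_fun (bilinear_opr << i >> opV_bil) h_lin.
- exact: linear_comp_fun g_lin (bilinear_opr (g << i >>) opW_bil).
exact: eq_ij.
Qed.

Lemma bilin_extE op (f g : V) :
  bilin_ext op f g = linext (fun i => linext (fun j => bvec (op (val i) (val j))) g) f.
Proof.
rewrite /bilin_ext /linext; apply: eq_bigr => i _; rewrite scaler_sumr.
by apply: eq_bigr => j _; rewrite scalerA.
Qed.

Lemma bilinear_bilin_ext op : bilinear_op (bilin_ext op).
Proof.
(* [W := V] is given explicitly: inferring it by unification is very slow. *)
split => a x y z; rewrite !bilin_extE; first exact: (linext_is_linear (W := V)).
pose row (i : PC) := linext (W := V) (fun j => bvec (op (val i) (val j))).
transitivity (linext (fun i => a *: row i y + row i z) x); last exact: linext_lincomb.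
by apply: eq_linext => i; apply: (linext_is_linear (W := V)).
Qed.

Lemma bvec_val (k : PC) : bvec (val k) = << k >>.
Proof. by rewrite /bvec valK. Qed.

Lemma pcode_val (k : PC) : pcode (val k).
Proof. by rewrite -is_pcE; exact: valP. Qed.

Lemma pcode_PC s : pcode s -> exists k : PC, val k = s.
Proof. by rewrite -is_pcE => pc_s; exists (exist _ s pc_s). Qed.

Lemma bilin_ext_bvec op s1 s2 : pcode s1 -> pcode s2 ->
  bilin_ext op (bvec s1) (bvec s2) = bvec (op s1 s2).
Proof. by move=> /pcode_PC[k1 <-] /pcode_PC[k2 <-]; rewrite !bvec_val bilin_extE !linextU. Qed.

(** * V is the free triduplicial algebra on x *)

Lemma triduplicialP (W : lmodType CC) (l c r : W -> W -> W) :
  triduplicial l c r <->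
  (forall A, bilinear_op (pick_op l c r A)) /\
  (forall A B, assoc_pair A B -> forall x y z,
     pick_op l c r B (pick_op l c r A x y) z = pick_op l c r A x (pick_op l c r B y z)).
Proof.
split=> [[bil_l [bil_c [bil_r [ll [cc [rr [rl [cl [rc cr]]]]]]]]] | [bil assoc]].
  by split; [case | case; case].
split; first exact: bil Prec. split; first exact: bil Circ. split; first exact: bil Succ.
split; first exact: assoc Prec Prec isT. split; first exact: assoc Circ Circ isT.
split; first exact: assoc Succ Succ isT. split; first exact: assoc Succ Prec isT.
split; first exact: assoc Circ Prec isT. split; first exact: assoc Succ Circ isT.
exact: assoc Circ Succ isT.
Qed.

Definition Vop (A : opkind) : V -> V -> V := bilin_ext (seq_op A).

Lemma VopE A : pick_op Vprec Vcirc Vsucc A = Vop A.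
Proof. by case: A. Qed.

Lemma Vop_bvec A s1 s2 : pcode s1 -> pcode s2 ->
  Vop A (bvec s1) (bvec s2) = bvec (seq_op A s1 s2).
Proof. exact: bilin_ext_bvec. Qed.

Lemma mixed_assoc_basis (opA opB : V -> V -> V) : bilinear_op opA -> bilinear_op opB ->
  (forall i j k, opB (opA << i >> << j >>) << k >> = opA << i >> (opB << j >> << k >>)) ->
  forall x y z, opB (opA x y) z = opA x (opB y z).
Proof.
move=> bil_A bil_B eq_ijk x y z.
move: x; apply: (linear_basis_ext (W := V)) => [||i].
- exact: linear_comp_fun (bilinear_opl y bil_A) (bilinear_opl z bil_B).
- exact: (bilinear_opl (W := V) _ bil_A).
move: y; apply: (linear_basis_ext (W := V)) => [||j].
- exact: linear_comp_fun (bilinear_opr _ bil_A) (bilinear_opl z bil_B).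
- exact: linear_comp_fun (bilinear_opl z bil_B) (bilinear_opr _ bil_A).
move: z; apply: (linear_basis_ext (W := V)) => [||k]; last exact: eq_ijk.
- exact: (bilinear_opr (W := V) _ bil_B).
- exact: linear_comp_fun (bilinear_opr _ bil_B) (bilinear_opr _ bil_A).
Qed.

Lemma V_triduplicial : triduplicial Vprec Vcirc Vsucc.
Proof.
apply/triduplicialP; split=> [A | A B AB]; rewrite !VopE; first exact: bilinear_bilin_ext.
apply: mixed_assoc_basis => [||i j k]; [exact: bilinear_bilin_ext.. |].
by rewrite -!bvec_val !Vop_bvec ?seq_op_assoc ?pcode_seq_op ?pcode_val.
Qed.

Section UniversalMap.
Variables (W : lmodType CC) (l c r : W -> W -> W) (w : W).
Hypothesis tri_lcr : triduplicial l c r.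

Fixpoint word_eval (t : word) : W :=
  match t with Wx => w | Wop A t u => pick_op l c r A (word_eval t) (word_eval u) end.

Lemma word_eval_nf_op A n m :
  word_eval (nf_op A n m) = pick_op l c r A (word_eval n) (word_eval m).
Proof.
have [_ assoc] := iffLR (triduplicialP l c r) tri_lcr.
elim: m A n => [|B m1 IH1 m2 IH2] A n //=.
by case: ifP => // AB; rewrite IH2 IH1 assoc.
Qed.

Lemma word_eval_nf t : word_eval (word_nf t) = word_eval t.
Proof. by elim: t => [|A t IHt u IHu] //=; rewrite word_eval_nf_op IHt IHu. Qed.

Lemma word_eval_code t1 t2 : word_code t1 = word_code t2 -> word_eval t1 = word_eval t2.
Proof.
move=> eq_code; rewrite -word_eval_nf -[RHS]word_eval_nf.
pose f := wsize (word_nf t1) + wsize (word_nf t2).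
rewrite -(@decode_word_code f (word_nf t1)) ?is_nf_word_nf ?leq_addr //.
rewrite -(@decode_word_code f (word_nf t2)) ?is_nf_word_nf ?leq_addl //.
by rewrite !word_code_nf eq_code.
Qed.

Definition univ_map : V -> W :=
  linext (fun k => word_eval (decode (size (val k)) (val k))).

Lemma univ_map_bvec s : pcode s -> univ_map (bvec s) = word_eval (decode (size s) s).
Proof. by case/pcode_PC=> k <-; rewrite bvec_val /univ_map linextU. Qed.

Lemma univ_map_Vop A u v :
  univ_map (Vop A u v) = pick_op l c r A (univ_map u) (univ_map v).
Proof.
have [bil _] := iffLR (triduplicialP l c r) tri_lcr.
apply: (bilinear_basis_morph (W := W)) => [||||i j]; first exact: bilinear_bilin_ext.
- exact: bil.
- exact: linext_is_linear.
- exact: linext_is_linear.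
rewrite -!bvec_val Vop_bvec ?pcode_val // !univ_map_bvec ?pcode_seq_op ?pcode_val //.
apply: (word_eval_code (t2 := Wop A _ _)).
by rewrite /= !word_code_decode ?pcode_seq_op ?pcode_val.
Qed.

Lemma univ_map_tri_morph : tri_morph Vprec Vcirc Vsucc l c r univ_map.
Proof.
split; first exact: linext_is_linear.
- exact: univ_map_Vop Prec.
- exact: univ_map_Vop Circ.
- exact: univ_map_Vop Succ.
Qed.

Lemma univ_map_x : univ_map xgen = w.
Proof. by rewrite /xgen univ_map_bvec. Qed.

Lemma tri_morph_univ_map (g : V -> W) :
  tri_morph Vprec Vcirc Vsucc l c r g -> g xgen = w -> g =1 univ_map.
Proof.
case=> g_lin g_prec g_circ g_succ g_x.
have g_Vop A u v : g (Vop A u v) = pick_op l c r A (g u) (g v).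
  by case: A; [exact: g_prec | exact: g_circ | exact: g_succ].
have g_word t : g (bvec (word_code t)) = word_eval t.
  elim: t => [|A t IHt u IHu] //.
  rewrite [word_code _]/= -(Vop_bvec A (pcode_word_code t) (pcode_word_code u)).
  by rewrite g_Vop IHt IHu.
apply: linear_basis_ext => // [|k]; first exact: linext_is_linear.
rewrite -bvec_val univ_map_bvec ?pcode_val //.
by rewrite -{1}(@word_code_decode (size (val k)) (val k)) ?pcode_val.
Qed.

End UniversalMap.

Theorem mainTheorem4 :
  triduplicial Vprec Vcirc Vsucc /\
  forall (W : lmodType CC) (l c r : W -> W -> W),
    triduplicial l c r ->
    forall w : W,
      exists f : V -> W,
        [/\ tri_morph Vprec Vcirc Vsucc l c r f, f xgen = w &
            forall g : V -> W, tri_morph Vprec Vcirc Vsucc l c r g ->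
              g xgen = w -> forall v, g v = f v].
Proof.
split; first exact: V_triduplicial.
move=> W l c r tri_lcr w; exists (univ_map l c r w); split.
- exact: univ_map_tri_morph.
- exact: univ_map_x.
- exact: tri_morph_univ_map.
Qed.
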